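(* Let $X$ be a minimal dendric shift over $\mathcal{A}_3=\{1,2,3\}$, let $\boldsymbol\sigma=(\sigma_n)_{n\ge1}$ be a primitive $\Sigma_3\mathcal{S}_3\Sigma_3$-adic representation of $X$, and let $\lambda_1,\lambda_2,\lambda_3$ be the letter frequencies of $X$. Suppose $\sigma_1\in\{\alpha,\pi_{132}\eta\pi_{321},\pi_{312}\beta\pi_{213},\pi_{213}\gamma\}\cup\{\pi_{213}\delta^{(k)}:k\ge1\}$. Then: $\lambda_1>\lambda_2+\lambda_3$ iff $\sigma_1=\alpha$; $\lambda_2,\lambda_3<\lambda_1<\lambda_2+\lambda_3$ iff $\sigma_1=\pi_{132}\eta\pi_{321}$; $\lambda_2<\lambda_1<\lambda_3$ iff $\sigma_1=\pi_{312}\beta\pi_{213}$; $\lambda_3<\lambda_1<\lambda_2$ iff $\sigma_1=\pi_{213}\gamma$; and, for $k\ge1$, ($\lambda_1<\lambda_2$, $\lambda_1<\lambda_3$ and $k\lambda_1<\lambda_3<(k+1)\lambda_1$) iff $\sigma_1=\pi_{213}\delta^{(k)}$.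
   Context: A shift space over $\mathcal{A}$ is a closed shift-invariant $X\subseteq\mathcal{A}^{\mathbb{Z}}$ in which all letters occur, with factor set $\mathcal{L}(X)$; minimal if its only closed shift-invariant subsets are $\emptyset,X$; dendric if for each $w\in\mathcal{L}(X)$ the bipartite graph with left vertices $\{a:aw\in\mathcal{L}(X)\}$, right vertices $\{b:wb\in\mathcal{L}(X)\}$ and edges $\{a,b\}$ for $awb\in\mathcal{L}(X)$ is a tree. $X$ has letter frequencies $(\lambda_a)_{a\in\mathcal{A}}$ if for all $x\in X$ and $a$, $\lim_n|x_1\cdots x_n|_a/n=\lambda_a$; minimal dendric shifts over $\mathcal{A}_3$ are known to be uniquely ergodic and hence to have letter frequencies. A directive sequence $(\sigma_n)$ of non-erasing morphisms is primitive if for each $n$ there is $N>n$ such that every letter occurs in $\sigma_n\cdots\sigma_{N-1}(b)$ for all letters $b$; it represents the shift of bi-infinite words all of whose factors occur in some $\sigma_1\cdots\sigma_{N-1}(a)$. $\pi_{abc}$ is the morphism $1\mapsto a,2\mapsto b,3\mapsto c$; $\Sigma_3$ the set of these; juxtaposition is composition. $\mathcal{S}_3=\{\alpha,\beta,\gamma,\eta\}\cup\{\delta^{(k)},\zeta^{(k)}:k\ge1\}$ with $\alpha:1\mapsto1,2\mapsto12,3\mapsto13$; $\beta:1\mapsto1,2\mapsto12,3\mapsto132$; $\gamma:1\mapsto1,2\mapsto12,3\mapsto123$; $\delta^{(k)}:1\mapsto1,2\mapsto123^k,3\mapsto123^{k+1}$; $\zeta^{(k)}:1\mapsto13^k,2\mapsto12,3\mapsto13^{k+1}$;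 $\eta:1\mapsto13,2\mapsto12,3\mapsto123$; a $\Sigma_3\mathcal{S}_3\Sigma_3$-adic representation has each $\sigma_n=\pi\sigma\pi'$ with $\pi,\pi'\in\Sigma_3$, $\sigma\in\mathcal{S}_3$. *)

From Stdlib Require Import Reals ZArith List Arith Relations.
Import ListNotations.

Inductive letter : Type := l1 | l2 | l3.

Definition letter_eqb (a b : letter) : bool :=
  match a, b with
  | l1, l1 | l2, l2 | l3, l3 => true
  | _, _ => false
  end.

Definition word := list letter.
Definition biword := Z -> letter.
Definition subshift := biword -> Prop.

Definition shift (x : biword) : biword := fun i => x (i + 1)%Z.

Definition window (x : biword) (i : Z) (n : nat) : word :=
  map (fun j => x (i + Z.of_nat j)%Z) (seq 0 n).

Definition is_factor (w u : word) : Prop := exists p s, u = p ++ w ++ s.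

Definition factor_of (w : word) (x : biword) : Prop :=
  exists i, w = window x i (length w).

Definition lang (X : subshift) (w : word) : Prop :=
  exists x, X x /\ factor_of w x.

(* Closed in the product topology of A^Z *)
Definition closed_set (X : subshift) : Prop :=
  forall x : biword,
    (forall n : nat, exists y, X y /\ forall i, (Z.abs i <= Z.of_nat n)%Z -> y i = x i) ->
    X x.

Definition shift_invariant (X : subshift) : Prop :=
  forall x, X x <-> X (shift x).

Definition shift_space (X : subshift) : Prop :=
  closed_set X /\ shift_invariant X /\ forall a : letter, lang X [a].

Definition subset_of (Y X : subshift) : Prop := forall x, Y x -> X x.
Definition set_equal (Y X : subshift) : Prop := forall x, Y x <-> X x.
Definition empty_set (Y : subshift) : Prop := forall x, ~ Y x.

Definition minimal (X : subshift) : Prop :=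
  forall Y : subshift, subset_of Y X -> closed_set Y -> shift_invariant Y ->
    empty_set Y \/ set_equal Y X.

Definition graph_connected {V : Type} (vert : V -> Prop) (E : V -> V -> Prop) : Prop :=
  forall u v, vert u -> vert v ->
    clos_refl_trans V (fun p q => vert p /\ vert q /\ E p q) u v.

Definition graph_acyclic {V : Type} (d : V) (vert : V -> Prop) (E : V -> V -> Prop) : Prop :=
  ~ exists c : list V,
      3 <= length c /\ NoDup c /\ Forall vert c /\
      forall i, i < length c -> E (nth i c d) (nth ((i + 1) mod length c) c d).

Definition is_tree {V : Type} (d : V) (vert : V -> Prop) (E : V -> V -> Prop) : Prop :=
  graph_connected vert E /\ graph_acyclic d vert E.

(* Extension graph of w in X: left vertices inl a with aw in L(X),
   right vertices inr b with wb in L(X), edges {a,b} with awb in L(X). *)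
Definition ext_vert (X : subshift) (w : word) (v : letter + letter) : Prop :=
  match v with
  | inl a => lang X (a :: w)
  | inr b => lang X (w ++ [b])
  end.

Definition ext_edge (X : subshift) (w : word) (u v : letter + letter) : Prop :=
  match u, v with
  | inl a, inr b => lang X (a :: w ++ [b])
  | inr b, inl a => lang X (a :: w ++ [b])
  | _, _ => False
  end.

Definition dendric (X : subshift) : Prop :=
  forall w, lang X w -> is_tree (inl l1) (ext_vert X w) (ext_edge X w).

Fixpoint count_letter (x : biword) (a : letter) (n : nat) : nat :=
  match n with
  | O => O
  | S m => count_letter x a m + (if letter_eqb (x (Z.of_nat (S m))) a then 1 else 0)
  end.

Definition has_letter_frequencies (X : subshift) (lam : letter -> R) : Prop :=
  forall x, X x -> forall a,
    Un_cv (fun n => (INR (count_letter x a n) / INR n)%R) (lam a).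

Definition morphism := letter -> word.

Definition apply_morph (f : morphism) (w : word) : word := flat_map f w.

(* juxtaposition = composition: (f g)(a) = f(g(a)) *)
Definition mcomp (f g : morphism) : morphism := fun a => apply_morph f (g a).

Definition mid : morphism := fun a => [a].

Definition same_morph (f g : morphism) : Prop := forall a, f a = g a.

Definition non_erasing (f : morphism) : Prop := forall a, f a <> [].

Fixpoint prodseg (sigma : nat -> morphism) (m k : nat) : morphism :=
  match k with
  | O => mid
  | S k' => mcomp (sigma m) (prodseg sigma (S m) k')
  end.

(* Directive sequences are indexed from 1: (sigma n)_{n >= 1}; sigma 0 is unused. *)
Definition directive (sigma : nat -> morphism) : Prop :=
  forall n, 1 <= n -> non_erasing (sigma n).

Definition is_primitive (sigma : nat -> morphism) : Prop :=
  forall n, 1 <= n -> exists N, n < N /\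
    forall a b, In a (prodseg sigma n (N - n) b).

Definition represents (sigma : nat -> morphism) (X : subshift) : Prop :=
  forall x, X x <->
    (forall i n, exists N a, 1 <= N /\ is_factor (window x i n) (prodseg sigma 1 (N - 1) a)).

Definition pi (a b c : letter) : morphism :=
  fun l => match l with l1 => [a] | l2 => [b] | l3 => [c] end.

Definition in_Sigma3 (f : morphism) : Prop :=
  exists a b c, a <> b /\ a <> c /\ b <> c /\ same_morph f (pi a b c).

Definition alpha : morphism :=
  fun l => match l with l1 => [l1] | l2 => [l1; l2] | l3 => [l1; l3] end.
Definition beta : morphism :=
  fun l => match l with l1 => [l1] | l2 => [l1; l2] | l3 => [l1; l3; l2] end.
Definition gamma : morphism :=
  fun l => match l with l1 => [l1] | l2 => [l1; l2] | l3 => [l1; l2; l3] end.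
Definition delta (k : nat) : morphism :=
  fun l => match l with
           | l1 => [l1]
           | l2 => [l1; l2] ++ repeat l3 k
           | l3 => [l1; l2] ++ repeat l3 (S k)
           end.
Definition zeta (k : nat) : morphism :=
  fun l => match l with
           | l1 => l1 :: repeat l3 k
           | l2 => [l1; l2]
           | l3 => l1 :: repeat l3 (S k)
           end.
Definition eta : morphism :=
  fun l => match l with l1 => [l1; l3] | l2 => [l1; l2] | l3 => [l1; l2; l3] end.

Definition in_S3 (f : morphism) : Prop :=
  same_morph f alpha \/ same_morph f beta \/ same_morph f gamma \/ same_morph f eta \/
  (exists k, 1 <= k /\ same_morph f (delta k)) \/
  (exists k, 1 <= k /\ same_morph f (zeta k)).

Definition SSS_adic (sigma : nat -> morphism) : Prop :=
  forall n, 1 <= n -> exists p s p', in_Sigma3 p /\ in_S3 s /\ in_Sigma3 p' /\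
    same_morph (sigma n) (mcomp (mcomp p s) p').

(* Take x in X. By primitivity, tau = sigma_2 ... sigma_K is a positive morphism,
   and every prefix of x is, up to a border of bounded length, the image under
   sigma_1 of a factor v of some tau(r). Its letter counts are therefore M c, with
   M the incidence matrix of sigma_1 and c the Parikh vector of v, and every entry
   of c grows linearly with the length of the prefix. Consequently, whenever the
   row vector w M is nonnegative and nonzero, the combination w . lambda is
   positive. Each of the five morphisms provides such weights w for all the
   inequalities of its region, and the regions are pairwise disjoint since
   frequencies are nonnegative. *)

From Stdlib Require Import Reals ZArith List Arith Lia Lra.
Import ListNotations.

Definition letter_eq_dec (a b : letter) : {a = b} + {a <> b}.
Proof. decide equality. Defined.

Definition count (a : letter) (w : word) : nat := count_occ letter_eq_dec w a.

Lemma count_app a u v : count a (u ++ v) = count a u + count a v.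
Proof. apply count_occ_app. Qed.

Lemma count_le_length a w : count a w <= length w.
Proof. apply count_occ_bound. Qed.

Lemma count_pos_In a w : In a w -> 0 < count a w.
Proof. apply count_occ_In. Qed.

Lemma count_repeat a b k : count a (repeat b k) = if letter_eq_dec b a then k else 0.
Proof.
  unfold count; destruct (letter_eq_dec b a) as [->|Hba].
  - now apply count_occ_repeat_eq.
  - apply count_occ_repeat_neq; congruence.
Qed.

Lemma count_factor a u w : is_factor u w ->
  count a u <= count a w <= count a u + (length w - length u).
Proof.
  intros [p [s ->]]. rewrite !count_app, !length_app.
  pose proof (count_le_length a p); pose proof (count_le_length a s). lia.
Qed.

Definition incidence_image (f : morphism) (c : letter -> nat) (a : letter) : nat :=
  count a (f l1) * c l1 + count a (f l2) * c l2 + count a (f l3) * c l3.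

Lemma count_apply_morph f v a :
  count a (apply_morph f v) = incidence_image f (fun b => count b v) a.
Proof.
  unfold incidence_image, apply_morph, count.
  induction v as [|b v IH]; cbn [flat_map count_occ]; [lia|].
  rewrite count_occ_app, IH. destruct b; cbn; lia.
Qed.

Lemma length_apply_morph_le (f : morphism) m v :
  (forall b, length (f b) <= m) -> length (apply_morph f v) <= m * length v.
Proof.
  intros Hm. unfold apply_morph. induction v as [|b v IH]; cbn; [lia|].
  rewrite length_app. specialize (Hm b). lia.
Qed.

Lemma prefix_desubstitution (f : morphism) m (W s : word) v :
  (forall b, length (f b) <= m) -> W ++ s = apply_morph f v ->
  exists v1 v2 t, v = v1 ++ v2 /\ W = apply_morph f v1 ++ t /\ length t <= m.
Proof.
  intros Hm. revert W. induction v as [|b v IH]; intros W H; cbn in H.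
  - apply app_eq_nil in H as [-> _]. exists [], [], []; repeat split; cbn; lia.
  - apply app_eq_app in H as [l [[-> H2]|[H1 _]]].
    + destruct (IH l (eq_sym H2)) as [v1 [v2 [t [-> [-> Ht]]]]].
      exists (b :: v1), v2, t. repeat split; [apply app_assoc | exact Ht].
    + exists [], (b :: v), W. repeat split.
      specialize (Hm b). rewrite H1, length_app in Hm. lia.
Qed.

Lemma factor_desubstitution (f : morphism) m (W : word) v :
  (forall b, length (f b) <= m) -> is_factor W (apply_morph f v) ->
  exists v', is_factor v' v /\ is_factor (apply_morph f v') W /\
             length W <= length (apply_morph f v') + 2 * m.
Proof.
  intros Hm [p [s H]]. revert p H. induction v as [|b v IH]; intros p H; cbn in H.
  - symmetry in H. apply app_eq_nil in H as [_ H]. apply app_eq_nil in H as [-> _].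
    exists []. repeat split; try (now exists [], []). cbn. lia.
  - symmetry in H. apply app_eq_app in H as [l [[H1 H2]|[H1 H2]]].
    + destruct (IH l H2) as [v' [[q [r ->]] Hrest]].
      exists v'. split; [now exists (b :: q), r | exact Hrest].
    + apply app_eq_app in H2 as [l' [[H3 H4]|[H3 H4]]].
      * destruct (prefix_desubstitution f m l' s v Hm (eq_sym H4))
          as [v1 [v2 [t [-> [Hl' Ht]]]]].
        exists v1. split; [|split].
        -- now exists [b], v2.
        -- exists l, t. now subst.
        -- subst W. rewrite Hl', !length_app. specialize (Hm b).
           rewrite H1, length_app in Hm. lia.
      * exists []. split; [now exists [], (b :: v)|]. split; [now exists [], W|].
        specialize (Hm b). rewrite H1, H3, !length_app in Hm. cbn. lia.
Qed.

Lemma factor_length_le_count (tau : morphism) L b (v r : word) :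
  (forall c, length (tau c) <= L) -> (forall c, In b (tau c)) ->
  is_factor v (apply_morph tau r) -> length v <= L * (count b v + 2).
Proof.
  intros HL Hb Hv.
  destruct (factor_desubstitution tau L v r HL Hv) as [r' [_ [Hr' Hlen]]].
  assert (Hcount : length r' <= count b (apply_morph tau r')).
  { clear -Hb. unfold apply_morph. induction r' as [|c r' IH]; cbn [flat_map length]; [lia|].
    rewrite count_app. pose proof (count_pos_In b _ (Hb c)). lia. }
  pose proof (length_apply_morph_le tau L r' HL).
  pose proof (count_factor b _ _ Hr'). nia.
Qed.

Lemma apply_morph_mid w : apply_morph mid w = w.
Proof. induction w as [|a w IH]; [reflexivity|]. cbn. now f_equal. Qed.

Lemma apply_morph_mcomp f g w :
  apply_morph (mcomp f g) w = apply_morph f (apply_morph g w).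
Proof.
  unfold apply_morph, mcomp. induction w as [|a w IH]; cbn; [reflexivity|].
  now rewrite flat_map_app, IH.
Qed.

Lemma prodseg_add sigma m k1 k2 b :
  prodseg sigma m (k1 + k2) b = apply_morph (prodseg sigma m k1) (prodseg sigma (m + k1) k2 b).
Proof.
  revert m. induction k1 as [|k1 IH]; intro m.
  - now rewrite Nat.add_0_r, apply_morph_mid.
  - cbn [Nat.add prodseg]. unfold mcomp at 1. rewrite IH, apply_morph_mcomp.
    now replace (S m + k1) with (m + S k1) by lia.
Qed.

Lemma window_length x i n : length (window x i n) = n.
Proof. unfold window. now rewrite length_map, length_seq. Qed.

Lemma count_letter_window x a n : count_letter x a n = count a (window x 1 n).
Proof.
  induction n as [|n IH]; [reflexivity|].
  unfold window. rewrite seq_S, map_app, count_app. fold (window x 1 n). rewrite <- IH.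
  cbn [count_letter map]. replace (1 + Z.of_nat (0 + n))%Z with (Z.of_nat (S n)) by lia.
  unfold count; cbn [count_occ].
  destruct (x (Z.of_nat (S n))), a; cbn; lia.
Qed.

Lemma bounded_up_to (g : nat -> letter -> nat) K :
  exists B, forall t a, t <= K -> g t a <= B.
Proof.
  induction K as [|K [B HB]].
  - exists (g 0 l1 + g 0 l2 + g 0 l3). intros t a Ht.
    replace t with 0 by lia. destruct a; lia.
  - exists (B + g (S K) l1 + g (S K) l2 + g (S K) l3). intros t a Ht.
    destruct (Nat.eq_dec t (S K)) as [->|Hne]; [destruct a; lia|].
    specialize (HB t a ltac:(lia)). lia.
Qed.

Lemma image_factor_counts (f tau : morphism) m L (W r : word) :
  (forall b, length (f b) <= m) -> (forall b, length (tau b) <= L) ->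
  (forall b c, In b (tau c)) ->
  is_factor W (apply_morph f (apply_morph tau r)) ->
  exists c : letter -> nat,
    (forall b, length W <= m * L * c b + 2 * m * L + 2 * m) /\
    (forall a, incidence_image f c a <= count a W <= incidence_image f c a + 2 * m).
Proof.
  intros Hm HL Hall HW.
  destruct (factor_desubstitution f m W _ Hm HW) as [v [Hv [HfvW Hlen]]].
  exists (fun b => count b v). split.
  - intro b. pose proof (factor_length_le_count tau L b v r HL (fun c => Hall b c) Hv).
    pose proof (length_apply_morph_le f m v Hm). nia.
  - intro a. rewrite <- count_apply_morph.
    pose proof (count_factor a _ _ HfvW). lia.
Qed.

Definition prefix_counts_through (f : morphism) (x : biword) : Prop :=
  exists D E N0, 0 < D /\ forall n, N0 <= n -> exists c : letter -> nat,
    (forall b, n <= D * c b + E) /\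
    (forall a, incidence_image f c a <= count_letter x a n <= incidence_image f c a + E).

Lemma represented_prefix_counts X sigma x :
  represents sigma X -> is_primitive sigma -> X x -> prefix_counts_through (sigma 1) x.
Proof.
  intros Hrep Hprim Hx.
  destruct (Hprim 2 ltac:(lia)) as [N2 [HN2 Hall]].
  set (K := N2 - 2). set (tau := prodseg sigma 2 K).
  set (m := length (sigma 1 l1) + length (sigma 1 l2) + length (sigma 1 l3)).
  set (L := length (tau l1) + length (tau l2) + length (tau l3)).
  destruct (bounded_up_to (fun t a => length (prodseg sigma 1 t a)) K) as [B HB].
  exists (m * L + 1), (2 * m * L + 2 * m), (S B). split; [lia|]. intros n Hn.
  destruct (proj1 (Hrep x) Hx 1%Z n) as [N [a [_ Hfac]]].
  assert (HK : K < N - 1).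
  { destruct (le_lt_dec (N - 1) K) as [Hle|]; [|assumption]. exfalso.
    specialize (HB _ a Hle). destruct Hfac as [p [s Hfac]]. cbn beta in HB.
    apply (f_equal (@length _)) in Hfac. rewrite !length_app, window_length in Hfac. lia. }
  replace (N - 1) with (S (K + (N - 2 - K))) in Hfac by lia.
  cbn [prodseg] in Hfac. unfold mcomp in Hfac. rewrite prodseg_add in Hfac.
  destruct (image_factor_counts (sigma 1) tau m L _ _
              ltac:(intros []; unfold m; lia) ltac:(intros []; unfold L; lia)
              ltac:(intros b c; apply Hall) Hfac) as [c [Hc Hcounts]].
  exists c. rewrite window_length in Hc. split.
  - intro b. specialize (Hc b). nia.
  - intro b. rewrite count_letter_window. specialize (Hcounts b). lia.
Qed.

Open Scope R_scope.

Lemma Un_cv_const c : Un_cv (fun _ => c) c.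
Proof. intros eps Heps. exists 0%nat. intros n _. unfold R_dist. rewrite Rminus_diag, Rabs_R0. lra. Qed.

Lemma ratio_limit_ge_slope (s : nat -> R) l e K N :
  Un_cv (fun n => s n / INR n) l ->
  (forall n, (N <= n)%nat -> e * INR n - K <= s n) -> e <= l.
Proof.
  intros Hcv Hlow. apply Rnot_lt_le. intro Hlt.
  destruct (Hcv ((e - l) / 2)) as [N1 HN1]; [lra|].
  destruct (INR_archimed ((e - l) / 2) K) as [n0 Hn0]; [lra|].
  set (n := (n0 + N + N1 + 1)%nat).
  specialize (HN1 n ltac:(unfold n; lia)). specialize (Hlow n ltac:(unfold n; lia)).
  assert (Hn : 0 < INR n) by (apply lt_0_INR; unfold n; lia).
  assert (Hn0n : INR n0 <= INR n) by (apply le_INR; unfold n; lia).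
  assert (Hs : s n = s n / INR n * INR n) by (field; lra).
  unfold R_dist in HN1. apply Rabs_def2 in HN1 as [HN1 _].
  nra.
Qed.

Lemma scaled_within_error (w : R) (y z e : nat) :
  (y <= z <= y + e)%nat -> w * INR y - Rabs w * INR e <= w * INR z.
Proof.
  intros [Hyz Hze]. apply le_INR in Hyz, Hze. rewrite plus_INR in Hze.
  pose proof (pos_INR e). unfold Rabs. destruct (Rcase_abs w); nra.
Qed.

Definition pullback_weight (w1 w2 w3 : R) (f : morphism) (b : letter) : R :=
  w1 * INR (count l1 (f b)) + w2 * INR (count l2 (f b)) + w3 * INR (count l3 (f b)).

Definition semipositive_pullback (w1 w2 w3 : R) (f : morphism) : Prop :=
  (forall b, 0 <= pullback_weight w1 w2 w3 f b) /\
  (exists b, 0 < pullback_weight w1 w2 w3 f b).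

Lemma pullback_weight_incidence w1 w2 w3 f c :
  w1 * INR (incidence_image f c l1) + w2 * INR (incidence_image f c l2)
    + w3 * INR (incidence_image f c l3) =
  pullback_weight w1 w2 w3 f l1 * INR (c l1) + pullback_weight w1 w2 w3 f l2 * INR (c l2)
    + pullback_weight w1 w2 w3 f l3 * INR (c l3).
Proof. unfold incidence_image, pullback_weight. rewrite !plus_INR, !mult_INR. ring. Qed.

Inductive shape : Type := Alpha | Eta | Beta | Gamma | Delta (k : nat).

Definition shape_morph (p : shape) : morphism :=
  match p with
  | Alpha => alpha
  | Eta => mcomp (mcomp (pi l1 l3 l2) eta) (pi l3 l2 l1)
  | Beta => mcomp (mcomp (pi l3 l1 l2) beta) (pi l2 l1 l3)
  | Gamma => mcomp (pi l2 l1 l3) gamma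
  | Delta k => mcomp (pi l2 l1 l3) (delta k)
  end.

Definition admissible (p : shape) : Prop :=
  match p with Delta k => (1 <= k)%nat | _ => True end.

Definition frequency_region (p : shape) (lam : letter -> R) : Prop :=
  match p with
  | Alpha => lam l1 > lam l2 + lam l3
  | Eta => lam l2 < lam l1 /\ lam l3 < lam l1 /\ lam l1 < lam l2 + lam l3
  | Beta => lam l2 < lam l1 < lam l3
  | Gamma => lam l3 < lam l1 < lam l2
  | Delta k => lam l1 < lam l2 /\ lam l1 < lam l3 /\
               INR k * lam l1 < lam l3 < INR (S k) * lam l1
  end.

Lemma frequency_regions_disjoint p q lam :
  (forall a, 0 <= lam a) -> frequency_region p lam -> frequency_region q lam -> p = q.
Proof.
  intros Hnonneg Hp Hq. pose proof (Hnonneg l1); pose proof (Hnonneg l2); pose proof (Hnonneg l3).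
  destruct p, q; cbn [frequency_region] in Hp, Hq; try reflexivity; try lra.
  f_equal. destruct (Nat.lt_total k k0) as [Hlt|[Heq|Hlt]]; [exfalso|exact Heq|exfalso];
    apply le_INR in Hlt; nra.
Qed.

Lemma pullback_weight_same w1 w2 w3 f g b :
  same_morph f g -> pullback_weight w1 w2 w3 f b = pullback_weight w1 w2 w3 g b.
Proof. intros Hfg. unfold pullback_weight. now rewrite Hfg. Qed.

Lemma pullback_weight_delta_shape w1 w2 w3 k b :
  pullback_weight w1 w2 w3 (shape_morph (Delta k)) b =
  match b with
  | l1 => w2
  | l2 => w1 + w2 + w3 * INR k
  | l3 => w1 + w2 + w3 * INR (S k)
  end.
Proof.
  unfold pullback_weight, shape_morph, mcomp.
  destruct b; rewrite ?count_apply_morph; unfold incidence_image, delta;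
    rewrite ?count_app, ?count_repeat; cbn -[INR]; rewrite ?Nat.add_0_r, ?S_INR, ?INR_0; lra.
Qed.

Lemma semipositive_pullback_delta_shape w1 w2 w3 k :
  0 <= w2 -> 0 <= w1 + w2 + w3 * INR k -> 0 <= w1 + w2 + w3 * (INR k + 1) ->
  0 < w2 \/ 0 < w1 + w2 + w3 * INR k \/ 0 < w1 + w2 + w3 * (INR k + 1) ->
  semipositive_pullback w1 w2 w3 (shape_morph (Delta k)).
Proof.
  intros H1 H2 H3 Hpos. split.
  - intros []; rewrite pullback_weight_delta_shape, ?S_INR; assumption.
  - destruct Hpos as [H|[H|H]]; [exists l1|exists l2|exists l3];
      rewrite pullback_weight_delta_shape, ?S_INR; assumption.
Qed.

Ltac semipositive_at b0 :=
  split; [intros []|exists b0]; unfold pullback_weight; cbn; lra.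

Section Frequencies.

Variables (x : biword) (lam : letter -> R).
Hypothesis Hfreq : forall a, Un_cv (fun n => INR (count_letter x a n) / INR n) (lam a).

Lemma frequency_nonneg a : 0 <= lam a.
Proof.
  apply (ratio_limit_ge_slope _ _ 0 0 0 (Hfreq a)). intros n _.
  pose proof (pos_INR (count_letter x a n)). lra.
Qed.

Lemma weighted_counts_cv w1 w2 w3 :
  Un_cv (fun n => (w1 * INR (count_letter x l1 n) + w2 * INR (count_letter x l2 n)
                   + w3 * INR (count_letter x l3 n)) / INR n)
        (w1 * lam l1 + w2 * lam l2 + w3 * lam l3).
Proof.
  apply Un_cv_ext with (fun n => w1 * (INR (count_letter x l1 n) / INR n)
    + w2 * (INR (count_letter x l2 n) / INR n) + w3 * (INR (count_letter x l3 n) / INR n)).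
  { intro n. unfold Rdiv. ring. }
  apply CV_plus; [apply CV_plus|]; apply CV_mult; auto using Un_cv_const.
Qed.

Variable f : morphism.
Hypothesis Hcounts : prefix_counts_through f x.

Lemma semipositive_pullback_frequencies w1 w2 w3 :
  semipositive_pullback w1 w2 w3 f -> 0 < w1 * lam l1 + w2 * lam l2 + w3 * lam l3.
Proof.
  intros [Hnonneg [b0 Hb0]]. destruct Hcounts as [D [E [N0 [HD Hc]]]].
  set (u := pullback_weight w1 w2 w3 f b0) in Hb0.
  assert (HDr : 0 < INR D) by (apply lt_0_INR; lia).
  apply Rlt_le_trans with (u / INR D); [apply Rdiv_lt_0_compat; assumption|].
  apply (ratio_limit_ge_slope _ _ _ (u * INR E / INR D + (Rabs w1 + Rabs w2 + Rabs w3) * INR E)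
           N0 (weighted_counts_cv w1 w2 w3)).
  intros n Hn. destruct (Hc n Hn) as [c [Hlen Happrox]].
  pose proof (scaled_within_error w1 _ _ E (Happrox l1)) as H1.
  pose proof (scaled_within_error w2 _ _ E (Happrox l2)) as H2.
  pose proof (scaled_within_error w3 _ _ E (Happrox l3)) as H3.
  pose proof (pullback_weight_incidence w1 w2 w3 f c) as Hdual.
  assert (Hdom : u * INR (c b0) <=
    pullback_weight w1 w2 w3 f l1 * INR (c l1) + pullback_weight w1 w2 w3 f l2 * INR (c l2)
    + pullback_weight w1 w2 w3 f l3 * INR (c l3)).
  { pose proof (Hnonneg l1); pose proof (Hnonneg l2); pose proof (Hnonneg l3).
    pose proof (pos_INR (c l1)); pose proof (pos_INR (c l2)); pose proof (pos_INR (c l3)).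
    unfold u; destruct b0; nra. }
  assert (Hgrowth : INR n <= INR D * INR (c b0) + INR E).
  { rewrite <- mult_INR, <- plus_INR. apply le_INR, Hlen. }
  assert (Hslope : u / INR D * INR n <= u * INR (c b0) + u * INR E / INR D).
  { apply Rmult_le_reg_l with (INR D); [assumption|].
    replace (INR D * (u / INR D * INR n)) with (u * INR n) by (field; lra).
    replace (INR D * (u * INR (c b0) + u * INR E / INR D))
      with (u * (INR D * INR (c b0) + INR E)) by (field; lra).
    apply Rmult_le_compat_l; lra. }
  lra.
Qed.

Lemma frequency_region_of_shape p :
  admissible p -> same_morph f (shape_morph p) -> frequency_region p lam.
Proof.
  intros Hadm Hf.
  assert (Hpos : forall w1 w2 w3, semipositive_pullback w1 w2 w3 (shape_morph p) ->
                   0 < w1 * lam l1 + w2 * lam l2 + w3 * lam l3).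
  { intros w1 w2 w3 [Hnonneg [b Hb]]. apply semipositive_pullback_frequencies.
    split; [intro c|exists b]; rewrite (pullback_weight_same _ _ _ _ _ _ Hf); auto. }
  destruct p; cbn [frequency_region].
  - pose proof (Hpos 1 (-1) (-1) ltac:(semipositive_at l1)). lra.
  - pose proof (Hpos 1 (-1) 0 ltac:(semipositive_at l2)).
    pose proof (Hpos 1 0 (-1) ltac:(semipositive_at l3)).
    pose proof (Hpos (-1) 1 1 ltac:(semipositive_at l1)). lra.
  - pose proof (Hpos 1 (-1) 0 ltac:(semipositive_at l1)).
    pose proof (Hpos (-1) 0 1 ltac:(semipositive_at l2)). lra.
  - pose proof (Hpos 1 0 (-1) ltac:(semipositive_at l2)).
    pose proof (Hpos (-1) 1 0 ltac:(semipositive_at l1)). lra.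
  - pose proof (le_INR 1 k Hadm) as Hk. rewrite INR_1 in Hk. rewrite S_INR.
    pose proof (Hpos (-1) 1 0 ltac:(apply semipositive_pullback_delta_shape; lra)).
    pose proof (Hpos (-1) 0 1 ltac:(apply semipositive_pullback_delta_shape; lra)).
    pose proof (Hpos (- INR k) 0 1 ltac:(apply semipositive_pullback_delta_shape; lra)).
    pose proof (Hpos (INR k + 1) 0 (-1) ltac:(apply semipositive_pullback_delta_shape; lra)).
    lra.
Qed.

Lemma frequency_region_iff_shape p0 :
  admissible p0 -> same_morph f (shape_morph p0) ->
  forall p, admissible p -> (frequency_region p lam <-> same_morph f (shape_morph p)).
Proof.
  intros Hadm0 Hf0 p Hadm. split.
  - intro Hreg. replace p with p0; [exact Hf0|].
    apply (frequency_regions_disjoint _ _ lam frequency_nonneg); [|exact Hreg].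
    exact (frequency_region_of_shape p0 Hadm0 Hf0).
  - exact (frequency_region_of_shape p Hadm).
Qed.

End Frequencies.

Theorem lemma6p8 (X : subshift) (sigma : nat -> morphism) (lam : letter -> R) :
  shift_space X -> minimal X -> dendric X ->
  directive sigma -> is_primitive sigma -> SSS_adic sigma -> represents sigma X ->
  has_letter_frequencies X lam ->
  (same_morph (sigma 1%nat) alpha \/
   same_morph (sigma 1%nat) (mcomp (mcomp (pi l1 l3 l2) eta) (pi l3 l2 l1)) \/
   same_morph (sigma 1%nat) (mcomp (mcomp (pi l3 l1 l2) beta) (pi l2 l1 l3)) \/
   same_morph (sigma 1%nat) (mcomp (pi l2 l1 l3) gamma) \/
   (exists k : nat, (1 <= k)%nat /\ same_morph (sigma 1%nat) (mcomp (pi l2 l1 l3) (delta k)))) ->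
  ((lam l1 > lam l2 + lam l3)%R <-> same_morph (sigma 1%nat) alpha) /\
  ((lam l2 < lam l1 /\ lam l3 < lam l1 /\ lam l1 < lam l2 + lam l3)%R <->
     same_morph (sigma 1%nat) (mcomp (mcomp (pi l1 l3 l2) eta) (pi l3 l2 l1))) /\
  ((lam l2 < lam l1 < lam l3)%R <->
     same_morph (sigma 1%nat) (mcomp (mcomp (pi l3 l1 l2) beta) (pi l2 l1 l3))) /\
  ((lam l3 < lam l1 < lam l2)%R <->
     same_morph (sigma 1%nat) (mcomp (pi l2 l1 l3) gamma)) /\
  (forall k : nat, (1 <= k)%nat ->
     ((lam l1 < lam l2 /\ lam l1 < lam l3 /\
       INR k * lam l1 < lam l3 < INR (S k) * lam l1)%R <->
      same_morph (sigma 1%nat) (mcomp (pi l2 l1 l3) (delta k)))).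
Proof.
  intros [_ [_ Hletters]] _ _ _ Hprim _ Hrep Hfreq Hcase.
  destruct (Hletters l1) as [x [Hx _]].
  pose proof (represented_prefix_counts X sigma x Hrep Hprim Hx) as Hcounts.
  assert (Hshape : exists p0, admissible p0 /\ same_morph (sigma 1%nat) (shape_morph p0)).
  { destruct Hcase as [H|[H|[H|[H|[k [Hk H]]]]]];
      [exists Alpha|exists Eta|exists Beta|exists Gamma|exists (Delta k)]; now split. }
  destruct Hshape as [p0 [Hadm0 Hs0]].
  pose proof (frequency_region_iff_shape x lam (Hfreq x Hx) _ Hcounts p0 Hadm0 Hs0) as Hiff.
  split; [|split; [|split; [|split]]].
  - exact (Hiff Alpha I).
  - exact (Hiff Eta I).
  - exact (Hiff Beta I).
  - exact (Hiff Gamma I).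
  - exact (fun k Hk => Hiff (Delta k) Hk).
Qed.
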